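(* Let $\Lambda$ be a row-finite $k$-graph with no sources, $S$ a semigroup, $\eta:\Lambda\to S$ a functor and $\Lambda\times_\eta S$ the associated skew product graph. If $\Lambda\times_\eta S$ is cofinal then $\Lambda$ is cofinal.
   Context: All semigroups are countable, cancellative, with identity. A $k$-graph is a countable category $\Lambda$ with a functor $d:\Lambda\to\mathbb{N}^k$ with unique factorisation; $\Lambda^n=d^{-1}(n)$, $\Lambda^0$ = vertices, $uXv=\{\lambda\in X:r(\lambda)=u,s(\lambda)=v\}$; row-finite: $v\Lambda^n$ finite; no sources: $v\Lambda^n\ne\emptyset$ for $n\ne0$. The skew product $\Lambda\times_\eta S$ has vertices $\Lambda^0\times S$, morphisms $\Lambda\times S$, $r(\lambda,t)=(r(\lambda),t)$, $s(\lambda,t)=(s(\lambda),t\eta(\lambda))$, $(\lambda,t)(\mu,t\eta(\lambda))=(\lambda\mu,t)$, $d(\lambda,t)=d(\lambda)$. A $k$-graph $\Gamma$ is cofinal if for all $v,w\in\Gamma^0$ there is $N\in\mathbb{N}^k$ with $v\Gamma s(\alpha)\ne\emptyset$ for every $\alpha\in w\Gamma^N$. *)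

From mathcomp Require Import all_boot.
Set Implicit Arguments. Unset Strict Implicit. Unset Printing Implicit Defensive.

Definition Nk (k : nat) := {ffun 'I_k -> nat}.
Definition Nk0 (k : nat) : Nk k := [ffun => 0%N].
Definition Nkadd (k : nat) (m n : Nk k) : Nk k := [ffun i => m i + n i].

Record kgraph (k : nat) := KGraph {
  kV : countType;
  kM : countType;
  kr : kM -> kV;
  ks : kM -> kV;
  kid : kV -> kM;
  kcomp : kM -> kM -> kM;              (* composition lam mu, meaningful when s lam = r mu *)
  kd : kM -> Nk k;
  kr_id : forall v, kr (kid v) = v;
  ks_id : forall v, ks (kid v) = v;
  kr_comp : forall l m, ks l = kr m -> kr (kcomp l m) = kr l;
  ks_comp : forall l m, ks l = kr m -> ks (kcomp l m) = ks m;
  kid_l : forall l, kcomp (kid (kr l)) l = l;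
  kid_r : forall l, kcomp l (kid (ks l)) = l;
  kcompA : forall l m n, ks l = kr m -> ks m = kr n ->
     kcomp l (kcomp m n) = kcomp (kcomp l m) n;
  kd_id : forall v, kd (kid v) = Nk0 k;
  kd_comp : forall l m, ks l = kr m -> kd (kcomp l m) = Nkadd (kd l) (kd m);
  kfact : forall l (m n : Nk k), kd l = Nkadd m n ->
     exists mu nu, [/\ ks mu = kr nu, l = kcomp mu nu, kd mu = m & kd nu = n];
  kfact_uniq : forall mu nu mu' nu',
     ks mu = kr nu -> ks mu' = kr nu' -> kd mu = kd mu' -> kd nu = kd nu' ->
     kcomp mu nu = kcomp mu' nu' -> mu = mu' /\ nu = nu'
}.

Definition row_finite k (L : kgraph k) : Prop :=
  forall (v : kV L) (n : Nk k), exists lst : seq (kM L),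
    forall l, kr l = v -> kd l = n -> l \in lst.

Definition no_sources k (L : kgraph k) : Prop :=
  forall (v : kV L) (n : Nk k), exists l, kr l = v /\ kd l = n.

(* Cofinality only involves the morphisms, r, s and d. *)
Definition cofinal_data k (V M : Type) (r s : M -> V) (d : M -> Nk k) : Prop :=
  forall v w : V, exists N : Nk k, forall a : M, r a = w -> d a = N ->
    exists mu : M, r mu = v /\ s mu = s a.

Definition cofinal k (L : kgraph k) : Prop := cofinal_data (@kr k L) (@ks k L) (@kd k L).

(* A countable cancellative semigroup with identity (i.e. monoid). *)
Record csemigroup := CSemigroup {
  sT : countType;
  sop : sT -> sT -> sT;
  sone : sT;
  sopA : forall x y z, sop x (sop y z) = sop (sop x y) z;
  sone_l : forall x, sop sone x = x;
  sone_r : forall x, sop x sone = x;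
  scancel_l : forall x y z, sop x y = sop x z -> y = z;
  scancel_r : forall x y z, sop y x = sop z x -> y = z
}.

Definition is_functor k (L : kgraph k) (S : csemigroup) (eta : kM L -> sT S) : Prop :=
  (forall v, eta (kid v) = sone S) /\
  (forall l m, ks l = kr m -> eta (kcomp l m) = sop (eta l) (eta m)).

Definition skew_r k (L : kgraph k) (S : csemigroup) (eta : kM L -> sT S)
  (x : kM L * sT S) : kV L * sT S := (kr x.1, x.2).
Definition skew_s k (L : kgraph k) (S : csemigroup) (eta : kM L -> sT S)
  (x : kM L * sT S) : kV L * sT S := (ks x.1, sop x.2 (eta x.1)).
Definition skew_d k (L : kgraph k) (S : csemigroup) (eta : kM L -> sT S)
  (x : kM L * sT S) : Nk k := kd x.1.
(* composition (l,t)(m, t eta(l)) = (lm, t) *)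
Definition skew_comp k (L : kgraph k) (S : csemigroup) (eta : kM L -> sT S)
  (x y : kM L * sT S) : kM L * sT S := (kcomp x.1 y.1, x.2).

Definition skew_cofinal k (L : kgraph k) (S : csemigroup) (eta : kM L -> sT S) : Prop :=
  cofinal_data (skew_r eta) (skew_s eta) (skew_d eta).

From mathcomp Require Import all_boot.

(* Project along (lambda, t) |-> lambda: the vertex (w, 1) of the skew product
   lies over w, and every path a out of w lifts to (a, 1) with the same degree,
   so the cofinality witness for (v, 1), (w, 1) upstairs works for v, w below. *)

Section CofinalProjection.

Variables (k : nat) (V V' M M' : Type).
Variables (r s : M -> V) (d : M -> Nk k).
Variables (r' s' : M' -> V') (d' : M' -> Nk k).
Variables (pV : V' -> V) (pM : M' -> M).

Hypothesis r_proj : forall x, r (pM x) = pV (r' x).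
Hypothesis s_proj : forall x, s (pM x) = pV (s' x).
Hypothesis lift_from : forall w, exists2 w', pV w' = w &
  forall a, r a = w -> exists a', [/\ r' a' = w', pM a' = a & d' a' = d a].

Lemma cofinal_data_proj : cofinal_data r' s' d' -> cofinal_data r s d.
Proof.
move=> cof v w.
have [v' <- _] := lift_from v.
have [w' <- lift_w] := lift_from w.
have [N HN] := cof v' w'.
exists N => a ra da.
have [a' [ra' pa' da']] := lift_w a ra.
have [mu' [rmu smu]] := HN a' ra' (etrans da' da).
by exists (pM mu'); rewrite -pa' r_proj s_proj rmu smu.
Qed.

End CofinalProjection.

Lemma skew_cofinal_cofinal k (L : kgraph k) (S : csemigroup) (eta : kM L -> sT S) :
  skew_cofinal eta -> cofinal L.
Proof.
apply: (@cofinal_data_proj k _ _ _ _ _ _ _ _ _ _ fst fst) => // w.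
by exists (w, sone S) => // a ra; exists (a, sone S); rewrite /skew_r ra.
Qed.

Theorem corollary4p8 (k : nat) (L : kgraph k) (S : csemigroup) (eta : kM L -> sT S) :
  row_finite L -> no_sources L -> is_functor eta ->
  skew_cofinal eta -> cofinal L.
Proof. by move=> _ _ _; apply: skew_cofinal_cofinal. Qed.
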